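(* Let $n\ge 1$, $k\ge1$, and $k=k_1+k_2$ with $k_1,k_2\ge 0$. Let $E$ be the set of all triples $(u,w,c)$ with $u\neq w$ in $[n]$ and $c\in[k]$, and let $\mathcal I$ be either (i) the set of all $(k_1,k_2)$-decreasing $k$-colored rooted forests on $[n]$, or (ii) the set of all $(k_1,k_2)$-non-increasing $k$-colored rooted forests on $[n]$. Then $(E,\mathcal I)$ is an $(n-1)$-covering system whose bases are the $k$-colored rooted trees in $\mathcal I$, and the map $\texttt{a}$ defined on each such tree $T$ by $$\texttt{a}(T)=\{(n,i,1)\in T:\ i\in[n]\}$$ (the set of edges of $T$ whose parent is $n$ and whose color is $1$) is an activity of $(E,\mathcal I)$.
   Context: For finite sets $X\subseteq Y$, write $[X,Y]=\{Z: X\subseteq Z\subseteq Y\}$. An $r$-covering system is a pair $(E,\mathcal I)$ where $E$ is a finite set and $\mathcal I$ is a collection of subsets of $E$, each of cardinality at most $r$, such that for every $I\in\mathcal I$ there exists $B\in\mathcal I$ with $|B|=r$ and $[I,B]\subseteq\mathcal I$; members of cardinality $r$ are bases. An activity is a function $\texttt{a}$ on the set $\mathcal B$ of bases with $\texttt{a}(B)\subseteq B$, $[B\setminus\texttt{a}(B),B]\subseteq\mathcal I$ for all $B$, and such that every $I\in\mathcal I$ lies in $[B\setminus\texttt{a}(B),B]$ for exactly one $B\in\mathcal B$. A $k$-colored rooted forest on $[n]$ is a set $F$ of triples $(u,w,c)$ ($u\ne w\in[n]$, $c\in[k]$; read as an edge from parent $u$ to child $w$ with color $c$) such that every vertex is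 the child in at most one triple and the underlying graph has no cycle; vertices that are not children are the roots (one per component). It is a tree if it has $n-1$ edges. For a vertex $v$ having at least one child, let $c_v$ be the minimum color of the edges from $v$ to its children. Given $k=k_1+k_2$, the forest is $(k_1,k_2)$-decreasing if for every vertex $v$ having a child and with $c_v\le k_1$, every child $w$ of $v$ joined to $v$ by an edge of color $c_v$ satisfies $w<v$. It is $(k_1,k_2)$-non-increasing if for every vertex $v$ having a child and with $c_v\le k_1$, at least one child $w$ of $v$ joined to $v$ by an edge of color $c_v$ satisfies $w<v$. (Colors in $[k_1+1,k]$ are ''free'': they are never checked.) *)

From mathcomp Require Import all_boot all_order.
Set Implicit Arguments. Unset Strict Implicit. Unset Printing Implicit Defensive.

Section Covering.
Variable T : finType.

Definition in_interval (X Y Z : {set T}) : Prop := X \subset Z /\ Z \subset Y.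

Definition covering_system (E : {set T}) (I : {set T} -> Prop) (r : nat) : Prop :=
  (forall X, I X -> X \subset E) /\
  (forall X, I X -> #|X| <= r) /\
  (forall X, I X -> exists B, [/\ I B, #|B| = r, X \subset B &
                       forall Z, in_interval X B Z -> I Z]).

Definition is_basis (I : {set T} -> Prop) (r : nat) (B : {set T}) : Prop :=
  I B /\ #|B| = r.

Definition is_activity (I : {set T} -> Prop) (r : nat)
    (a : {set T} -> {set T}) : Prop :=
  (forall B, is_basis I r B -> a B \subset B) /\
  (forall B, is_basis I r B ->
     forall Z, in_interval (B :\: a B) B Z -> I Z) /\
  (forall X, I X -> exists B, [/\ is_basis I r B, in_interval (B :\: a B) B X &
       forall B', is_basis I r B' -> in_interval (B' :\: a B') B' X -> B' = B]).
End Covering.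

(* ---------- Colored rooted forests on [n] with colors in [k] ----------
   Vertices [n] are 'I_n (vertex i+1 of the paper is the ordinal i) and
   colors [k] are 'I_k (color c+1 of the paper is the ordinal c). *)
Section Forests.
Variables n k : nat.
Definition triple := ('I_n * 'I_n * 'I_k)%type.

Definition parent (e : triple) : 'I_n := e.1.1.
Definition child (e : triple) : 'I_n := e.1.2.
Definition color (e : triple) : 'I_k := e.2.

Definition Eset : {set triple} := [set e : triple | parent e != child e].

Definition joins (e : triple) (x y : 'I_n) : bool :=
  ((parent e == x) && (child e == y)) || ((parent e == y) && (child e == x)).

Definition has_cycle (F : {set triple}) : Prop :=
  exists (es : seq triple) (vs : seq 'I_n),
    [/\ 0 < size es, uniq es, uniq vs, all (fun e => e \in F) es &
        all2 (fun e p => joins e p.1 p.2) es (zip vs (rot 1 vs))].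

Definition colored_forest (F : {set triple}) : Prop :=
  [/\ F \subset Eset,
      (forall w : 'I_n, #|[set e in F | child e == w]| <= 1) &
      ~ has_cycle F].

Definition colored_tree (F : {set triple}) : Prop :=
  colored_forest F /\ #|F| = n.-1.

Definition has_child (F : {set triple}) (v : 'I_n) : bool :=
  [exists e in F, parent e == v].

Definition cmin (F : {set triple}) (v : 'I_n) : nat :=
  \big[minn/k]_(e in F | parent e == v) (nat_of_ord (color e)).

(* (k1,k2)-decreasing; the paper's condition c_v <= k1 becomes cmin < k1
   under the 0-based shift of colors *)
Definition decreasing (k1 : nat) (F : {set triple}) : Prop :=
  forall v : 'I_n, has_child F v -> cmin F v < k1 ->
    forall e, e \in F -> parent e = v -> nat_of_ord (color e) = cmin F v ->
      child e < v.

Definition non_increasing (k1 : nat) (F : {set triple}) : Prop :=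
  forall v : 'I_n, has_child F v -> cmin F v < k1 ->
    exists e, [/\ e \in F, parent e = v, nat_of_ord (color e) = cmin F v &
                  child e < v].

(* the activity: edges of T with parent n (ordinal n-1) and color 1 (ordinal 0) *)
Definition act (B : {set triple}) : {set triple} :=
  [set e in B | (nat_of_ord (parent e) == n.-1) && (nat_of_ord (color e) == 0)].
End Forests.

(* Both the decreasing and the non-increasing conditions hold automatically at the
   largest vertex n, all of whose children are smaller, and elsewhere they only
   look at the edges leaving the vertex; so membership in I is insensitive to the
   edges leaving n. Given a forest X in I, the tree T obtained by joining to n,
   with color 1, every root of X other than the root of the tree containing n is
   the only tree with T \ a(T) <= X <= T; it lies in I, and any Z between
   T \ a(T) and T is a forest that differs from T only in edges leaving n. *)

From mathcomp Require Import all_boot all_order zify.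
Set Implicit Arguments. Unset Strict Implicit. Unset Printing Implicit Defensive.

Lemma path_rcons_zip (T : Type) (r : rel T) x p z :
  path r x (rcons p z) -> all (fun q => r q.1 q.2) (zip (x :: p) (rcons p z)).
Proof.
elim: p x => [|y p IH] x /=; first by rewrite andbT.
by case/andP=> -> /IH.
Qed.

Lemma all2_mapl (A B : Type) (r : A -> B -> bool) (f : B -> A) s :
  all2 r (map f s) s = all (fun x => r (f x) x) s.
Proof. by elim: s => //= x s ->. Qed.

Lemma mem_all2 (A B : eqType) (r : A -> B -> bool) s t x :
  all2 r s t -> x \in s -> exists2 y, y \in t & r x y.
Proof.
elim: s t => [|a s IH] [|b t] //= /andP[rab rst]; rewrite inE => /orP[/eqP->|xs].
  by exists b; rewrite ?inE ?eqxx.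
by have [y yt rxy] := IH _ rst xs; exists y; rewrite ?inE ?yt ?orbT.
Qed.

Lemma mem_zip (A B : eqType) (s : seq A) (t : seq B) x y :
  (x, y) \in zip s t -> x \in s /\ y \in t.
Proof.
elim: s t => [|a s IH] [|b t] //=; rewrite inE => /orP[/eqP[-> ->]|/IH[xs yt]].
  by rewrite !inE !eqxx.
by rewrite !inE xs yt !orbT.
Qed.

Section Forests.
Variables n k : nat.
Implicit Types (F G : {set triple n k}) (e : triple n k) (u v w : 'I_n).

Definition parent_rel F : rel 'I_n :=
  fun u w => [exists e in F, (parent e == u) && (child e == w)].

Definition is_root F v := ~~ [exists e in F, child e == v].

Definition child_injective F := {in F &, injective (@child n k)}.

Definition is_height F (h : 'I_n -> nat) :=
  forall e, e \in F -> h (parent e) < h (child e).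

Definition depth F v := #|[set x | connect (parent_rel F) x v]|.

Lemma parent_relP F u w :
  reflect (exists2 e, e \in F & parent e = u /\ child e = w) (parent_rel F u w).
Proof.
apply: (iffP existsP) => [[e /and3P[eF /eqP pe /eqP ce]]|[e eF [pe ce]]]; exists e => //.
by rewrite eF pe ce !eqxx.
Qed.

Lemma parent_rel_edge F e : e \in F -> parent_rel F (parent e) (child e).
Proof. by move=> eF; apply/parent_relP; exists e. Qed.

Lemma is_rootPn F v : reflect (exists2 e, e \in F & child e = v) (~~ is_root F v).
Proof.
rewrite negbK; apply: (iffP existsP) => [[e /andP[eF /eqP ce]]|[e eF ce]]; exists e => //.
by rewrite eF ce eqxx.
Qed.

Lemma child_injectiveE F :
  (forall w, #|[set e in F | child e == w]| <= 1) <-> child_injective F.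
Proof.
split=> [le1 e1 e2 e1F e2F ce|injF w].
  by apply: (card_le1_eqP (le1 (child e1))); rewrite inE ?e1F ?e2F ?ce eqxx.
apply/card_le1_eqP => e1 e2; rewrite !inE => /andP[e1F /eqP c1] /andP[e2F /eqP c2].
by apply: injF; rewrite ?c1 ?c2.
Qed.

Lemma forest_child_injective F : colored_forest F -> child_injective F.
Proof. by case=> _ /child_injectiveE. Qed.

Lemma colored_forest_sub F G : F \subset G -> colored_forest G -> colored_forest F.
Proof.
move=> sFG [sGE le1 acycG]; split.
- exact: subset_trans sFG sGE.
- move=> w; apply: leq_trans (le1 w); apply: subset_leq_card.
  by apply/subsetP => e; rewrite !inE => /andP[/(subsetP sFG) -> ->].
- move=> [es [vs [es_gt0 uniq_es uniq_vs esF joins_es]]]; apply: acycG.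
  exists es, vs; split => //.
  by apply/allP => e /(allP esF) /(subsetP sFG).
Qed.

(* Closing a shortest path from w to u by the edge u -> w yields a cycle; its
   edges are recovered from their children, each having a single parent edge. *)
Lemma parent_rel_not_connect_back F u w :
  child_injective F -> ~ has_cycle F -> parent_rel F u w -> ~~ connect (parent_rel F) w u.
Proof.
move=> injF acycF puw; apply/negP => /connectP[p p_path def_u]; subst u.
case/parent_relP: (puw) => e0 _ _.
move: puw; case: (shortenP p_path) => p' p'_path uniq_p' _ puw.
pose in_edge y := odflt e0 [pick e in F | child e == y].
have in_edgeP a b : parent_rel F a b ->
    [/\ in_edge b \in F, parent (in_edge b) = a & child (in_edge b) = b].
  case/parent_relP => e eF [pe ce]; rewrite /in_edge.
  case: pickP => [f /andP[fF /eqP cf]|/(_ e)]; last by rewrite eF ce eqxx.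
  by rewrite /= (injF f e) // cf ce.
pose steps := zip (w :: p') (rcons p' w).
have stepP q : q \in steps ->
    [/\ in_edge q.2 \in F, parent (in_edge q.2) = q.1 & child (in_edge q.2) = q.2].
  move=> qin; apply: in_edgeP; apply: (allP (path_rcons_zip _) q qin).
  by rewrite rcons_path p'_path puw.
apply: acycF; exists (map (in_edge \o snd) steps), (w :: p'); split.
- by rewrite size_map size_zip /= size_rcons minnn.
- rewrite map_inj_in_uniq; first exact: zip_uniql.
  move=> [a b] [c d] /stepP[_ /= pab cab] /stepP[_ /= pcd ccd] /= eq_edge.
  by rewrite -pab -cab -pcd -ccd eq_edge.
- exact: uniq_p'.
- by apply/allP => e /mapP[q /stepP[qF _ _] ->].
- rewrite rot1_cons all2_mapl; apply/allP => q /stepP[_ pq cq].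
  by rewrite /joins /= pq cq !eqxx.
Qed.

Lemma forest_depth F : colored_forest F -> is_height F (depth F).
Proof.
move=> forestF e eF; have [_ _ acycF] := forestF.
apply: proper_card; rewrite properE; apply/andP; split.
  apply/subsetP => x; rewrite !inE => /connect_trans; apply.
  exact: connect1 (parent_rel_edge eF).
apply/subsetPn; exists (child e); rewrite !inE ?connect0 //.
have injF := forest_child_injective forestF.
exact: parent_rel_not_connect_back injF acycF (parent_rel_edge eF).
Qed.

(* The children of the edges of a cycle are all of its vertices, so each vertex
   of the cycle has a lower one. *)
Lemma acyclic_of_height F h : child_injective F -> is_height F h -> ~ has_cycle F.
Proof.
move=> injF hF [es [vs [es_gt0 uniq_es uniq_vs esF joins_es]]].
have esF' : {subset es <= F} by move=> e /(allP esF).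
have size_es : size es = size vs.
  by move: (joins_es); rewrite all2E size_zip size_rot minnn => /andP[/eqP].
have ends_in_vs e : e \in es -> parent e \in vs /\ child e \in vs.
  case/(mem_all2 joins_es) => -[a b] /mem_zip[av]; rewrite mem_rot => bv.
  by case/orP => /andP[/eqP-> /eqP->].
have vs_children : {subset vs <= map (@child n k) es}.
  have uniq_children : uniq (map (@child n k) es).
    by rewrite map_inj_in_uniq // => e1 e2 /esF' ? /esF'; apply: injF.
  have children_in_vs : {subset map (@child n k) es <= vs}.
    by move=> _ /mapP[e /ends_in_vs[_ ?] ->].
  have size_le : size vs <= size (map (@child n k) es) by rewrite size_map size_es.
  by have [_ eq_vs] := uniq_min_size uniq_children children_in_vs size_le => v; rewrite -eq_vs.
have h_unbounded m v : v \in vs -> m <= h v.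
  elim: m v => // m IH v /vs_children /mapP[e ein ->].
  exact: leq_ltn_trans (IH _ (ends_in_vs e ein).1) (hF _ (esF' _ ein)).
have /hasP[v0 v0_in _] : has predT vs by rewrite has_predT -size_es.
by have := h_unbounded (h v0).+1 v0 v0_in; rewrite ltnn.
Qed.

Lemma connect_parent_rel_last F x w : connect (parent_rel F) x w -> x != w ->
  exists2 e, e \in F & child e = w /\ connect (parent_rel F) x (parent e).
Proof.
case/connectP => p p_path ->; case/lastP: p p_path => [|p y] /=; first by rewrite eqxx.
rewrite rcons_path last_rcons => /andP[p_path /parent_relP[e eF [pe ce]]] _.
by exists e => //; split => //; rewrite pe; apply/connectP; exists p.
Qed.

Lemma connect_to_root F x r : connect (parent_rel F) x r -> is_root F r -> x = r.
Proof.
move=> xr rootr; apply/eqP; apply: contraTT rootr => neq_xr.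
by have [e eF [ce _]] := connect_parent_rel_last xr neq_xr; apply/is_rootPn; exists e.
Qed.

Section Height.
Variables (F : {set triple n k}) (h : 'I_n -> nat).
Hypothesis heightF : is_height F h.

Lemma exists_root_ancestor v : exists2 r, is_root F r & connect (parent_rel F) r v.
Proof.
elim: (h v).+1 {-2}v (ltnSn (h v)) => // m IH {}v hv.
have [rootv|/is_rootPn[e eF ce]] := boolP (is_root F v); first by exists v.
rewrite -ce in hv; have [r rootr cr] := IH (parent e) (leq_trans (heightF eF) hv).
by exists r => //; apply: connect_trans cr (connect1 _); rewrite -ce parent_rel_edge.
Qed.

Lemma root_ancestor_unique v r1 r2 : child_injective F ->
  is_root F r1 -> is_root F r2 ->
  connect (parent_rel F) r1 v -> connect (parent_rel F) r2 v -> r1 = r2.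
Proof.
move=> injF; elim: (h v).+1 {-2}v (ltnSn (h v)) r1 r2 => // m IH {}v hv r1 r2.
move=> root1 root2 c1 c2.
have [rootv|/is_rootPn[e eF ce]] := boolP (is_root F v).
  by rewrite (connect_to_root c1 rootv) (connect_to_root c2 rootv).
have not_v r : is_root F r -> r != v.
  by move=> rootr; apply: contraTneq rootr => ->; apply/is_rootPn; exists e.
have [e1 e1F [ce1 c1']] := connect_parent_rel_last c1 (not_v _ root1).
have [e2 e2F [ce2 c2']] := connect_parent_rel_last c2 (not_v _ root2).
rewrite (injF e1 e) ?ce1 ?ce // in c1'; rewrite (injF e2 e) ?ce2 ?ce // in c2'.
rewrite -ce in hv; exact: IH (leq_trans (heightF eF) hv) _ _ root1 root2 c1' c2'.
Qed.

End Height.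

End Forests.

Section TopInsensitive.
Variables n k : nat.
Implicit Types (F G B Z : {set triple n k}) (e : triple n k) (v : 'I_n).

Definition top_insensitive (P : {set triple n k} -> Prop) :=
  forall F G, G \subset Eset n k ->
    (forall e, parent e != n.-1 :> nat -> (e \in F) = (e \in G)) -> P F -> P G.

Lemma child_lt_top F e :
  F \subset Eset n k -> e \in F -> parent e = n.-1 :> nat -> child e < parent e.
Proof.
move=> sFE eF pe; move: (subsetP sFE e eF); rewrite inE -(inj_eq val_inj) /= pe.
by move: (ltn_ord (child e)); lia.
Qed.

Lemma has_child_agree F G v :
  (forall e, parent e = v -> (e \in F) = (e \in G)) -> has_child F v = has_child G v.
Proof.
move=> FG; apply/existsP/existsP => -[e /andP[eF /eqP pe]];
  by exists e; rewrite pe eqxx andbT ?FG // -FG.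
Qed.

Lemma cmin_agree F G v :
  (forall e, parent e = v -> (e \in F) = (e \in G)) -> cmin F v = cmin G v.
Proof.
move=> FG; apply: eq_bigl => e /=.
by case: (eqVneq (parent e) v) => [/FG ->|]; rewrite ?andbT ?andbF.
Qed.

Lemma cmin_attained F v : cmin F v < k ->
  exists2 e, e \in F & parent e = v /\ color e = cmin F v :> nat.
Proof.
pose attained x := (x == k) || [exists e in F, (parent e == v) && (color e == x :> nat)].
suff : attained (cmin F v).
  case/orP => [/eqP -> |/existsP[e /and3P[eF /eqP pe /eqP ce]]]; first by rewrite ltnn.
  by exists e.
apply: (big_ind attained); first by rewrite /attained eqxx.
  by move=> x y ax ay; case: (leqP x y).
by move=> e /andP[eF pe]; apply/orP; right; apply/existsP; exists e; rewrite eF pe eqxx.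
Qed.

Lemma decreasing_top_insensitive k1 : top_insensitive (decreasing k1).
Proof.
move=> F G sGE FG decF v hasv cminv e eG pe ce.
have [vtop|vtop] := eqVneq (v : nat) n.-1; first by rewrite -pe (child_lt_top sGE eG) ?pe.
have FGv e' : parent e' = v -> (e' \in F) = (e' \in G) by move=> pe'; rewrite FG ?pe'.
rewrite -(has_child_agree FGv) in hasv; rewrite -(cmin_agree FGv) in cminv ce *.
by apply: (decF v hasv cminv e) => //; rewrite FGv.
Qed.

Lemma non_increasing_top_insensitive k1 : k1 <= k -> top_insensitive (non_increasing k1).
Proof.
move=> k1k F G sGE FG nincF v hasv cminv.
have [vtop|vtop] := eqVneq (v : nat) n.-1.
  have [e eG [pe ce]] := cmin_attained (leq_trans cminv k1k).
  by exists e; split => //; rewrite -pe (child_lt_top sGE eG) ?pe.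
have FGv e' : parent e' = v -> (e' \in F) = (e' \in G) by move=> pe'; rewrite FG ?pe'.
rewrite -(has_child_agree FGv) in hasv; rewrite -(cmin_agree FGv) in cminv *.
by have [e [eF pe ce lt]] := nincF v hasv cminv; exists e; split; rewrite -?FGv.
Qed.

Lemma top_insensitive_interval P B Z : top_insensitive P ->
  colored_forest B -> P B -> in_interval (B :\: act B) B Z -> colored_forest Z /\ P Z.
Proof.
move=> Ptop forestB PB [sBZ sZB]; split; first exact: colored_forest_sub sZB forestB.
have [sBE _ _] := forestB; apply: (Ptop B) => //; first exact: subset_trans sZB sBE.
move=> e pe; apply/idP/idP => [eB|/(subsetP sZB)//]; apply: (subsetP sBZ).
by rewrite in_setD eB andbT inE eB (negPf pe).
Qed.

End TopInsensitive.

Section Completion.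
Variables (n k : nat) (top : 'I_n) (c0 : 'I_k).
Hypotheses (topE : top = n.-1 :> nat) (c0E : c0 = 0 :> nat).
Implicit Types (X B : {set triple n k}) (e : triple n k).

Lemma act_topE B e : (e \in act B) = [&& e \in B, parent e == top & color e == c0].
Proof. by rewrite inE -!(inj_eq val_inj) /= topE c0E. Qed.

Definition root_grafts X := [set e | [&& parent e == top, color e == c0,
  is_root X (child e) & ~~ connect (parent_rel X) (child e) top]].

Definition completion X := X :|: root_grafts X.

Variable X : {set triple n k}.
Hypothesis forestX : colored_forest X.

Lemma root_graftsP e : e \in root_grafts X ->
  [/\ parent e = top, color e = c0, is_root X (child e)
     & ~~ connect (parent_rel X) (child e) top].
Proof. by rewrite inE => /and4P[/eqP -> /eqP -> -> ->]. Qed.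

Lemma completion_child_injective : child_injective (completion X).
Proof.
have graft_child e f : e \in root_grafts X -> f \in X -> child f != child e.
  case/root_graftsP => _ _ root_e _ fX.
  by apply: contraTneq root_e => <-; apply/is_rootPn; exists f.
move=> e1 e2; rewrite !in_setU => /orP[e1X|e1g] /orP[e2X|e2g] ce.
- exact: (forest_child_injective forestX).
- by move: (graft_child _ _ e2g e1X); rewrite ce eqxx.
- by move: (graft_child _ _ e1g e2X); rewrite ce eqxx.
- have [p1 c1 _ _] := root_graftsP e1g; have [p2 c2 _ _] := root_graftsP e2g.
  move: p1 c1 p2 c2 ce; case: e1 e2 {e1g e2g} => [[? ?] ?] [[? ?] ?].
  by rewrite /parent /child /color /= => -> -> -> -> ->.
Qed.

Lemma completion_sub_Eset : completion X \subset Eset n k.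
Proof.
have [sXE _ _] := forestX.
apply/subsetP => e; rewrite in_setU => /orP[/(subsetP sXE)//|/root_graftsP[pe _ _ not_conn]].
by rewrite inE pe; apply: contraNneq not_conn => <-; apply: connect0.
Qed.

(* Vertices outside the tree of [top] are raised by [n + 1], above every depth,
   so that the grafted edges leaving [top] also go up. *)
Lemma completion_height :
  is_height (completion X) (fun v => depth X v + n.+1 * ~~ connect (parent_rel X) v top).
Proof.
move=> e; rewrite in_setU => /orP[eX|/root_graftsP[-> _ _ not_conn]].
  have lt_depth := forest_depth forestX eX.
  case conn: (connect (parent_rel X) (child e) top).
    by rewrite (connect_trans (connect1 (parent_rel_edge eX)) conn) /= !muln0 !addn0.
  by case: (connect _ (parent e) top) => /=; lia.
rewrite connect0 (negPf not_conn) /=.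
have : depth X top <= n by rewrite /depth (leq_trans (max_card _)) ?card_ord.
lia.
Qed.

Lemma completion_forest : colored_forest (completion X).
Proof.
split; first exact: completion_sub_Eset.
  exact/child_injectiveE/completion_child_injective.
exact: acyclic_of_height completion_child_injective completion_height.
Qed.

Lemma card_completion : #|completion X| = n.-1.
Proof.
have heightX := forest_depth forestX.
have [rho root_rho rho_top] := exists_root_ancestor heightX top.
rewrite -(card_in_imset completion_child_injective).
have -> : n.-1 = #|[set~ rho]| by rewrite cardsC1 card_ord.
apply: eq_card => w; rewrite !inE; apply/imsetP/idP.
  case=> e; rewrite in_setU => /orP[eX|/root_graftsP[_ _ _ not_conn]] ->.
    by apply: contraTneq root_rho => <-; apply/is_rootPn; exists e.
  by apply: contraNneq not_conn => ->.
move=> w_rho; have [root_w|/is_rootPn[e eX <-]] := boolP (is_root X w); last first.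
  by exists e; rewrite // in_setU eX.
have [conn|not_conn] := boolP (connect (parent_rel X) w top).
  have injX := forest_child_injective forestX.
  have := root_ancestor_unique heightX injX root_w root_rho conn rho_top.
  by move/eqP; rewrite (negPf w_rho).
exists (top, w, c0) => //.
by rewrite in_setU inE /parent /child /color /= !eqxx root_w not_conn orbT.
Qed.

Lemma completion_act_sub : completion X :\: act (completion X) \subset X.
Proof.
apply/subsetP => e; rewrite in_setD act_topE /completion in_setU => /andP[not_act /orP[//|eg]].
have [pe ce _ _] := root_graftsP eg.
by rewrite eg orbT pe ce !eqxx in not_act.
Qed.

Lemma completion_unique B : colored_forest B -> #|B| = n.-1 ->
  B :\: act B \subset X -> X \subset B -> B = completion X.
Proof.
move=> forestB cardB sBX sXB; have [_ _ acycB] := forestB.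
have injB := forest_child_injective forestB.
apply/eqP; rewrite eqEcard card_completion cardB leqnn andbT.
apply/subsetP => e eB; rewrite in_setU; have [//|eX /=] := boolP (e \in X).
have : e \in act B.
  by apply: contraNT eX => not_act; apply: (subsetP sBX); rewrite in_setD not_act.
rewrite act_topE => /and3P[_ /eqP pe /eqP ce]; rewrite inE pe ce !eqxx /=; apply/andP; split.
  apply: contraNT eX => /is_rootPn[f fX cf].
  by rewrite -(injB f e (subsetP sXB f fX) eB cf).
apply/negP => conn; have := parent_rel_not_connect_back injB acycB (parent_rel_edge eB).
rewrite pe (connect_sub _ conn) // => u w /parent_relP[f fX [pf cf]].
by apply: connect1; rewrite -pf -cf parent_rel_edge ?(subsetP sXB).
Qed.

Lemma completion_top_insensitive P : top_insensitive P -> P X -> P (completion X).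
Proof.
move=> Ptop PX; apply: (Ptop X) completion_sub_Eset _ PX => e pe.
rewrite in_setU; have [/root_graftsP[pe' _ _ _]|] := boolP (e \in root_grafts X).
  by rewrite pe' topE eqxx in pe.
by rewrite orbF.
Qed.

End Completion.

Theorem top_insensitive_activity n k (P : {set triple n k} -> Prop) :
  0 < n -> 0 < k -> top_insensitive P ->
  let I F := colored_forest F /\ P F in
  [/\ covering_system (Eset n k) I n.-1,
      (forall B, is_basis I n.-1 B <-> colored_tree B /\ I B) &
      is_activity I n.-1 (@act n k)].
Proof.
move=> n_gt0 k_gt0 Ptop I.
have top_lt : n.-1 < n by rewrite ltn_predL.
pose top := Ordinal top_lt; pose c0 := Ordinal k_gt0.
have completionP X : I X ->
    [/\ colored_forest (completion top c0 X), P (completion top c0 X),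
        #|completion top c0 X| = n.-1,
        completion top c0 X :\: act (completion top c0 X) \subset X
      & X \subset completion top c0 X].
  case=> forestX PX; split; last exact: subsetUl.
  - exact: completion_forest.
  - exact: completion_top_insensitive.
  - exact: card_completion.
  - exact: completion_act_sub.
split.
- split; first by move=> X [[]].
  split=> X /completionP[forestT PT cardT sTX sXT]; first by rewrite -cardT subset_leq_card.
  exists (completion top c0 X); split=> // Z [sXZ sZT].
  apply: (top_insensitive_interval Ptop forestT PT).
  by split=> //; apply: subset_trans sTX sXZ.
- by move=> B; split=> [[[forestB PB] cardB]|[[forestB cardB] IB]].
split; [|split].
- by move=> B _; apply/subsetP => e /setIdP[].
- by move=> B [[forestB PB] _] Z; apply: top_insensitive_interval Ptop forestB PB.
move=> X IX; have [forestT PT cardT sTX sXT] := completionP X IX.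
exists (completion top c0 X); split => //.
by move=> B [[forestB _] cardB] [sBX sXB]; apply: (completion_unique _ _ IX.1).
Qed.

Theorem proposition4p2 (n k1 k2 : nat) :
  1 <= n -> 1 <= k1 + k2 ->
  forall I : {set triple n (k1 + k2)} -> Prop,
    (I = (fun F => colored_forest F /\ decreasing k1 F)) \/
    (I = (fun F => colored_forest F /\ non_increasing k1 F)) ->
    [/\ covering_system (Eset n (k1 + k2)) I n.-1,
        (forall B, is_basis I n.-1 B <-> (colored_tree B /\ I B)) &
        is_activity I n.-1 (@act n (k1 + k2))].
Proof.
move=> n_gt0 k_gt0 I [|] ->; apply: top_insensitive_activity => //.
  exact: decreasing_top_insensitive.
exact/non_increasing_top_insensitive/leq_addr.
Qed.
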